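(* Let $r\geq 2$ be an integer and $C>1$. Let $\epsilon'>0$ be sufficiently small compared to $C^{-3}6^{-r}$ (i.e. $0<\epsilon'<\epsilon_0$ for a suitable $\epsilon_0=\epsilon_0(r,C)>0$), and let $n_0$ be sufficiently large. Let $G$ be a complete $r$-partite graph with parts $X_1,\ldots,X_r$, each of size at least $n_0$, whose edges are colored yellow, pink and white, such that: (1) $|X_1|\geq |X_2|\geq\cdots\geq |X_r|$; (2) $\frac{1}{C}\leq \frac{|X_i|}{|X_j|}\leq C$ for all $i,j\in[r]$; (3) for all $i,j\in[r]$ with $1\leq j<i$ and every $v\in X_i$, the vertex $v$ is incident to at most $\left(\frac{1}{r-1}-\frac{\epsilon' C^3}{r-1}\right)|X_j|$ pink edges going to $X_j$; (4) the total number of yellow edges is at most $\epsilon' 6^{-r}\sum_{1\leq i<j\leq r}|X_i||X_j|$. Then $G$ contains a copy of $K_r$ all of whose edges are white.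
   Context: $[r]=\{1,\ldots,r\}$. $K_r$ denotes the complete graph on $r$ vertices. *)

From HB Require Import structures.
From mathcomp Require Import all_boot all_order all_algebra.
From mathcomp Require Import reals.
Set Implicit Arguments. Unset Strict Implicit. Unset Printing Implicit Defensive.

Inductive color := Yellow | Pink | White.

Definition color_eqb (a b : color) : bool :=
  match a, b with
  | Yellow, Yellow | Pink, Pink | White, White => true
  | _, _ => false
  end.

Lemma color_eqP : Equality.axiom color_eqb.
Proof. by move=> [] []; constructor. Qed.

HB.instance Definition _ := hasDecEq.Build color color_eqP.

(* A complete r-partite graph is given by a finite vertex type T together with
   a part map [part : T -> 'I_r]; X_i = part^{-1}(i) and u,v are adjacent iff
   part u != part v. An edge colouring is a symmetric map col : T -> T -> color
   (its values on non-edges are irrelevant). Parts are indexed 0..r-1 instead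
   of 1..r. *)

Definition part_set (T : finType) (r : nat) (part : T -> 'I_r) (i : 'I_r) : {set T} :=
  [set v | part v == i].

Definition pink_deg (T : finType) (r : nat) (part : T -> 'I_r)
  (col : T -> T -> color) (v : T) (j : 'I_r) : nat :=
  #|[set u | (part u == j) && (col v u == Pink)]|.

Definition yellow_edges (T : finType) (r : nat) (part : T -> 'I_r)
  (col : T -> T -> color) : nat :=
  #|[set p : T * T | (part p.1 < part p.2)%N && (col p.1 p.2 == Yellow)]|.

Definition has_white_Kr (T : finType) (r : nat) (part : T -> 'I_r)
  (col : T -> T -> color) : Prop :=
  exists f : 'I_r -> T, forall i j : 'I_r, i != j ->
    part (f i) != part (f j) /\ col (f i) (f j) = White.

From HB Require Import structures.
From mathcomp Require Import all_boot all_order all_algebra.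
From mathcomp Require Import reals.
From mathcomp Require Import ring zify.
Set Implicit Arguments. Unset Strict Implicit. Unset Printing Implicit Defensive.
Import Order.TTheory GRing.Theory Num.Theory.

(* The white K_r is chosen greedily, one vertex per part, from the last part
   down to the first. With d = eps' C^3 / (r - 1), call a vertex low-yellow if
   it has fewer than d |X_k| yellow neighbours in every earlier part X_k; all
   chosen vertices are low-yellow. By (3), each chosen vertex has fewer than
   |X_m| / (r - 1) non-white neighbours in the current part X_m. Summing yellow
   degrees towards earlier parts, (2) and (4) show that fewer than
   |X_m| / (r - 1) vertices of X_m are not low-yellow: one factor C compares
   |X_k| with |X_m|, two more bound the sum in (4) by r^2 (C |X_m|)^2, and
   6^r exceeds r^2 (r - 1)^2. For m > 1 at most r - 2 vertices have been chosen,
   and X_1 has no earlier part, so in both cases some vertex of X_m survives. *)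

Lemma leq_card_bigcup (T I : finType) (P : pred I) (A : I -> {set T}) :
  #|\bigcup_(i | P i) A i| <= \sum_(i | P i) #|A i|.
Proof.
apply: (big_ind2 (fun (X : {set T}) n => #|X| <= n)) => [|X1 n1 X2 n2 le1 le2|//].
  by rewrite cards0.
exact: leq_trans (leq_card_setU X1 X2) (leq_add le1 le2).
Qed.

Lemma card_pairs_sum (T : finType) (P : T -> T -> bool) :
  #|[set p : T * T | P p.1 p.2]| = \sum_(v : T) #|[set u | P u v]|.
Proof.
rewrite -sum1_card big_mkcond /= (eq_bigr (fun p : T * T => (P p.1 p.2 : nat))); last first.
  by move=> p _; rewrite inE; case: (P _ _).
rewrite -(pair_big xpredT xpredT (fun u v => (P u v : nat))) exchange_big /=.
apply: eq_bigr => v _; rewrite -sum1_card [RHS]big_mkcond /=.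
by apply: eq_bigr => u _; rewrite inE; case: (P _ _).
Qed.

Lemma card_ord_gt (r m : nat) : #|[pred i : 'I_r | m < i]| = r - m.+1.
Proof.
rewrite -sum1_card.
have := @big_geq_mkord _ 0 addn m.+1 r xpredT (fun _ => 1).
by rewrite sum_nat_const_nat muln1 => <-.
Qed.

Lemma leq_exp4_exp6 (r : nat) : r ^ 4 <= 6 ^ r.
Proof.
elim: r => [|[|[|[|r]]] IH] //.
by rewrite expnS; apply: leq_trans (leq_mul (leqnn 6) IH); nia.
Qed.

Section GreedyClique.
Variables (T : finType) (r : nat) (part : T -> 'I_r) (col : T -> T -> color).
Hypothesis col_sym : forall u v, col u v = col v u.

Definition nonwhite_nbhd (v : T) (j : 'I_r) : {set T} :=
  [set u | (part u == j) && (col v u != White)].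

Definition yellow_deg (v : T) (j : 'I_r) : nat :=
  #|[set u | (part u == j) && (col v u == Yellow)]|.

Definition lower_yellow_deg (v : T) : nat :=
  #|[set u | (part u < part v) && (col v u == Yellow)]|.

Lemma card_nonwhite_nbhd v j :
  #|nonwhite_nbhd v j| = pink_deg part col v j + yellow_deg v j.
Proof.
rewrite /pink_deg /yellow_deg -cardsUI.
have -> : [set u | (part u == j) && (col v u == Pink)]
          :&: [set u | (part u == j) && (col v u == Yellow)] = set0.
  by apply/setP => u; rewrite !inE; case: (col v u); rewrite !andbF.
rewrite cards0 addn0; apply: eq_card => u; rewrite !inE.
by case: (col v u); rewrite ?andbF ?andbT ?orbF.
Qed.

Lemma yellow_deg_le_lower v (k : 'I_r) : k < part v -> yellow_deg v k <= lower_yellow_deg v.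
Proof.
move=> lt_k; apply: subset_leq_card; apply/subsetP => u.
by rewrite !inE => /andP[/eqP-> ->]; rewrite lt_k.
Qed.

Lemma yellow_edges_sum : yellow_edges part col = \sum_v lower_yellow_deg v.
Proof.
rewrite /yellow_edges (card_pairs_sum (fun u v => (part u < part v) && (col u v == Yellow))).
by apply: eq_bigr => v _; apply: eq_card => u; rewrite !inE col_sym.
Qed.

Lemma white_extension (good : pred T) (m : 'I_r) (f : 'I_r -> T) :
  #|[set u | (part u == m) && ~~ good u]|
    + \sum_(i : 'I_r | m < i) #|nonwhite_nbhd (f i) m| < #|part_set part m| ->
  exists2 u, part u = m /\ good u & forall i : 'I_r, m < i -> col (f i) u = White.
Proof.
move=> lt_card.
pose blocked := [set u | (part u == m) && ~~ good u]
                :|: \bigcup_(i : 'I_r | m < i) nonwhite_nbhd (f i) m.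
have /subsetPn[u] : ~~ (part_set part m \subset blocked).
  apply: contraTN lt_card => sub; rewrite -leqNgt.
  apply: leq_trans (subset_leq_card sub) (leq_trans (leq_card_setU _ _) _).
  by rewrite leq_add2l leq_card_bigcup.
rewrite !inE => /eqP pu; rewrite pu eqxx /= negb_or negbK => /andP[gu notin].
exists u; first by split.
move=> i mi; apply/eqP; apply: contraNT notin => nw.
by apply/bigcupP; exists i => //; rewrite inE pu eqxx nw.
Qed.

Lemma greedy_white_Kr (good : pred T) (x0 : T) :
  (forall (m : 'I_r) (f : 'I_r -> T),
     (forall i : 'I_r, m < i -> part (f i) = i /\ good (f i)) ->
     exists2 u, part u = m /\ good u & forall i : 'I_r, m < i -> col (f i) u = White) ->
  has_white_Kr part col.
Proof.
move=> extend.
pose white_from k (f : 'I_r -> T) := forall i : 'I_r, k <= i ->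
  [/\ part (f i) = i, good (f i)
    & forall j : 'I_r, k <= j -> i != j -> col (f i) (f j) = White].
suff /(_ r (leqnn r)) [f] : forall n, n <= r -> exists f, white_from (r - n) f.
  rewrite subnn => Hf; exists f => i j ij.
  have [pi _ wi] := Hf i isT; have [pj _ _] := Hf j isT.
  by split; [rewrite pi pj | exact: wi].
elim=> [_|n IH lt_nr].
  by exists (fun _ => x0) => i; rewrite subn0 leqNgt ltn_ord.
have [f Hf] := IH (ltnW lt_nr).
have lt_mr : r - n.+1 < r by lia.
pose m := Ordinal lt_mr.
have from_m i : m < i -> r - n <= i by rewrite /=; lia.
have lt_of_ne (i : 'I_r) : r - n.+1 <= i -> i != m -> m < i.
  move=> le_mi; apply: contraNT; rewrite -leqNgt => le_im.
  by apply/eqP/val_inj/eqP; rewrite /= eqn_leq le_im.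
have [|u [pu gu] wu] := extend m f.
  by move=> i /from_m /Hf [].
exists (fun k => if k == m then u else f k) => i /lt_of_ne le_mi.
case: (eqVneq i m) => [-> | ne_im]; last first.
  have [pi gi wi] := Hf i (from_m i (le_mi ne_im)).
  split=> // j /lt_of_ne le_mj ij; case: (eqVneq j m) => [_ | ne_jm].
    exact: wu (le_mi ne_im).
  exact: wi (from_m j (le_mj ne_jm)) ij.
split=> // j /lt_of_ne le_mj; rewrite eq_sym => ne_jm.
by rewrite (negbTE ne_jm) col_sym; apply: wu; apply: le_mj.
Qed.

End GreedyClique.

Local Open Scope ring_scope.

Section LowYellow.
Variables (R : realFieldType) (T : finType) (r : nat).
Variables (part : T -> 'I_r) (col : T -> T -> color).
Hypothesis col_sym : forall u v, col u v = col v u.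

Definition low_yellow (d : R) : pred T := fun v =>
  [forall k : 'I_r, (k < part v)%N ==>
     ((yellow_deg part col v k)%:R < d * #|part_set part k|%:R)].

Lemma card_nonwhite_nbhd_lt (K d : R) v (j : 'I_r) :
  (j < part v)%N -> low_yellow d v ->
  (pink_deg part col v j)%:R <= (K^-1 - d) * #|part_set part j|%:R ->
  #|nonwhite_nbhd part col v j|%:R < #|part_set part j|%:R / K.
Proof.
move=> lt_j /forallP /(_ j); rewrite lt_j /= => yellow_lt pink_le.
rewrite card_nonwhite_nbhd natrD mulrC.
by rewrite -[K^-1](subrK d) mulrDl ler_ltD.
Qed.

Lemma card_not_low_yellow_le (d a : R) (m : 'I_r) :
  0 <= d ->
  (forall k, a <= #|part_set part k|%:R) ->
  #|[set v | (part v == m) && ~~ low_yellow d v]|%:R * (d * a)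
    <= (yellow_edges part col)%:R.
Proof.
move=> d_ge0 a_le; rewrite (yellow_edges_sum part col_sym) natr_sum.
set Bad := [set v | _]; rewrite (bigID (mem Bad)) /= mulr_natl -sumr_const.
rewrite -[leLHS]addr0 lerD ?sumr_ge0 // ler_sum // => v.
rewrite inE => /andP[_ /forallPn[k]]; rewrite negb_imply -leNgt => /andP[lt_k deg_ge].
apply: le_trans (ler_wpM2l d_ge0 (a_le k)) (le_trans deg_ge _).
by rewrite ler_nat yellow_deg_le_lower.
Qed.

End LowYellow.

Section ColouringConditions.
Variables (R : realFieldType) (C eps : R) (T : finType) (r : nat).
Variables (part : T -> 'I_r) (col : T -> T -> color).

Local Notation N k := (#|part_set part k|%:R : R).
Local Notation K := (r.-1%:R : R).
Local Notation d := (eps * C ^+ 3 / K).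
Local Notation Bad m := [set v | (part v == m) && ~~ low_yellow part col d v].

Hypotheses (col_sym : forall u v, col u v = col v u) (r_ge2 : (2 <= r)%N).
Hypotheses (C_gt1 : 1 < C) (eps_gt0 : 0 < eps).
Hypothesis part_ratio : forall i j : 'I_r, C^-1 <= N i / N j /\ N i / N j <= C.
Hypothesis pink_small : forall i j : 'I_r, (j < i)%N -> forall v, part v = i ->
  (pink_deg part col v j)%:R <= (K^-1 - d) * N j.
Hypothesis yellow_few : (yellow_edges part col)%:R
  <= eps * (6%:R ^+ r)^-1 * \sum_(i < r) \sum_(j < r | (i < j)%N) N i * N j.

Let K_gt0 : 0 < K. Proof. by rewrite ltr0n; case: (r) r_ge2 => [|[]]. Qed.

Lemma part_card_gt0 k : 0 < N k.
Proof.
have := (part_ratio k k).1; rewrite lt0r ler0n andbT; apply: contraTneq => ->.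
by rewrite mul0r -ltNge invr_gt0 (lt_trans ltr01 C_gt1).
Qed.

Lemma part_card_le k m : N k <= C * N m.
Proof. by rewrite -ler_pdivrMr ?part_card_gt0 // (part_ratio k m).2. Qed.

Lemma yellow_edges_le m :
  (yellow_edges part col)%:R <= eps * (r%:R ^+ 2 / 6%:R ^+ r) * (C * N m) ^+ 2.
Proof.
apply: le_trans yellow_few _.
have -> : eps * (r%:R ^+ 2 / 6%:R ^+ r) * (C * N m) ^+ 2
        = eps * (6%:R ^+ r)^-1 * \sum_(i < r) \sum_(j < r) (C * N m) ^+ 2.
  by rewrite !sumr_const card_ord; ring.
rewrite ler_pM2l ?mulr_gt0 ?invr_gt0 ?exprn_gt0 // ler_sum // => i _.
rewrite [leLHS]big_mkcond ler_sum // => j _; case: ifP => _; last exact: sqr_ge0.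
by rewrite expr2 ler_pM ?ler0n ?part_card_le.
Qed.

Lemma card_not_low_yellow_lt m : #|Bad m|%:R < N m / K.
Proof.
have Nm_gt0 := part_card_gt0 m.
set q : R := r%:R ^+ 2 / 6%:R ^+ r.
have qK_lt1 : q * K ^+ 2 < 1.
  have : ((r * r.-1) ^ 2 < 6 ^ r)%N.
    have r_gt0 : (0 < r)%N by apply: leq_trans r_ge2.
    apply: leq_trans (leq_exp4_exp6 r).
    by rewrite -[4%N]/(2 * 2)%N expnM ltn_exp2r // -mulnn ltn_pmul2l // ltn_predL.
  rewrite -(ltr_nat R) !natrX natrM exprMn => lt6.
  by rewrite mulrAC ltr_pdivrMr ?exprn_gt0 ?ltr0n // mul1r.
have C_gt0 : 0 < C := lt_trans ltr01 C_gt1.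
have d_ge0 : 0 <= d by rewrite !mulr_ge0 ?exprn_ge0 ?invr_ge0 ?ltW.
have a_le k : N m / C <= N k by rewrite ler_pdivrMr // mulrC part_card_le.
have := le_trans (card_not_low_yellow_le col_sym m d_ge0 a_le) (yellow_edges_le m).
set b := #|Bad m|%:R.
have -> : b * (d * (N m / C)) = eps * C ^+ 2 * N m * (b / K).
  by field; rewrite (gt_eqF K_gt0) (gt_eqF C_gt0).
have -> : eps * q * (C * N m) ^+ 2 = eps * C ^+ 2 * N m * (q * N m) by ring.
rewrite ler_pM2l ?mulr_gt0 ?exprn_gt0 // ler_pdivrMr // => b_le.
apply: le_lt_trans b_le _; rewrite ltr_pdivlMr //.
by rewrite (_ : _ * K * K = q * K ^+ 2 * N m) ?gtr_pMl //; ring.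
Qed.

Lemma card_blocked_lt (m : 'I_r) (f : 'I_r -> T) :
  (forall i : 'I_r, (m < i)%N -> part (f i) = i /\ low_yellow part col d (f i)) ->
  (#|Bad m| + \sum_(i : 'I_r | (m < i)%N) #|nonwhite_nbhd part col (f i) m|
     < #|part_set part m|)%N.
Proof.
move=> chosen; rewrite -(ltr_nat R) natrD natr_sum.
set c := N m / K.
have nw_lt (i : 'I_r) : (m < i)%N -> #|nonwhite_nbhd part col (f i) m|%:R < c.
  move=> lt_mi; have [pf low] := chosen i lt_mi.
  by apply: card_nonwhite_nbhd_lt low (pink_small lt_mi pf); rewrite pf.
have sum_c : \sum_(i : 'I_r | (m < i)%N) c = c *+ (r - m.+1).
  by rewrite sumr_const card_ord_gt.
have Nm : N m = c *+ r.-1 by rewrite -[c *+ _]mulr_natr divfK // gt_eqF.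
have c_ge0 : 0 <= c by rewrite divr_ge0 ?ler0n // ltW.
case: (posnP m) => [m0 | m_gt0].
  have -> : #|Bad m| = 0%N.
    apply: eq_card0 => v; rewrite !inE; case: eqP => //= pv.
    by apply/negbF/forallP => k; rewrite pv m0.
  rewrite add0r Nm (_ : r.-1 = r - m.+1)%N; last by rewrite m0 subn1.
  rewrite -sum_c; apply: ltr_sum => //; apply/hasP.
  by exists (Ordinal r_ge2); rewrite ?mem_index_enum //= m0.
apply: lt_le_trans (ltr_leD (card_not_low_yellow_lt m) (_ : _ <= c *+ (r - m.+1))) _.
  by rewrite -sum_c; apply: ler_sum => i /nw_lt /ltW.
rewrite -mulrS [leRHS]Nm; apply: ler_wpMn2l => //; have := ltn_ord m; lia.
Qed.

Lemma white_Kr_exists : has_white_Kr part col.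
Proof.
have [x0 _] : exists x0, x0 \in part_set part (Ordinal (ltnW r_ge2)).
  by apply/card_gt0P; rewrite -(ltr0n R) part_card_gt0.
apply: (greedy_white_Kr col_sym (good := low_yellow part col d) x0) => m f chosen.
exact/white_extension/card_blocked_lt.
Qed.

End ColouringConditions.

Theorem lemma3 (R : realType) (r : nat) (C : R) :
  (2 <= r)%N -> 1 < C ->
  exists eps0 : R, 0 < eps0 /\
  forall eps' : R, 0 < eps' -> eps' < eps0 ->
  exists n0 : nat,
  forall (T : finType) (part : T -> 'I_r) (col : T -> T -> color),
    (forall u v, col u v = col v u) ->
    (forall i : 'I_r, (n0 <= #|part_set part i|)%N) ->
    (* (1) *)
    (forall i j : 'I_r, (i <= j)%N -> (#|part_set part j| <= #|part_set part i|)%N) ->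
    (* (2) *)
    (forall i j : 'I_r,
        C^-1 <= (#|part_set part i|)%:R / (#|part_set part j|)%:R
        /\ (#|part_set part i|)%:R / (#|part_set part j|)%:R <= C) ->
    (* (3) *)
    (forall i j : 'I_r, (j < i)%N -> forall v : T, part v = i ->
        (pink_deg part col v j)%:R
          <= ((r.-1)%:R^-1 - eps' * C ^+ 3 / (r.-1)%:R) * (#|part_set part j|)%:R) ->
    (* (4) *)
    (yellow_edges part col)%:R
      <= eps' * (6%:R ^+ r)^-1 *
         \sum_(i < r) \sum_(j < r | (i < j)%N)
            (#|part_set part i|)%:R * (#|part_set part j|)%:R ->
    has_white_Kr part col.
Proof.
move=> r_ge2 C_gt1; exists 1; split=> [|eps eps_gt0 _]; first exact: ltr01.
exists 0%N => T part col col_sym _ _ part_ratio pink_small yellow_few.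
exact: white_Kr_exists col_sym r_ge2 C_gt1 eps_gt0 part_ratio pink_small yellow_few.
Qed.
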